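(* Let $\mathcal{F}^*$ be one of $\mathcal{F}^c,\mathcal{F}^{ev},\mathcal{F}^o$, let $\kappa=\kappa(H,\lambda,\alpha)$ be a nonsingular quadratic function in $\mathcal{F}^*$ and let $H_0$ be a direct summand of $H$ such that $\kappa_0:=\kappa|_{H_0}$ is nondegenerate. Then: 1. $H_1:=H_0^\perp=\{v\in H:\lambda(v,v_0)=0\ \forall v_0\in H_0\}$ is a direct summand of $H$; 2. $\kappa_1:=(\kappa|_{H_1})^-$ and $\kappa_0$ are nondegenerate members of $\mathcal{F}^*$; 3. there is an isometry $\theta_\kappa$ of the induced quadratic linking families $\delta^*(\kappa_0)\cong\delta^*(\kappa_1)$; 4. $\kappa$ is isometric to $\kappa_0\cup_{\theta_\kappa}\kappa_1^-$.
   Context: A quadratic function $\kappa(H,\lambda,\alpha)$: $H$ finitely generated free abelian, $\lambda$ symmetric bilinear into $\mathbb{Z}$, $\alpha\in H^*$, $\kappa(v)=\lambda(v,v)+\alpha(v)$; adjoint $\hat\lambda:H\to H^*$; nondegenerate if $\hat\lambda$ injective, nonsingular if bijective; $\kappa^-=\kappa(H,-\lambda,\alpha)$; restriction to a subgroup restricts $\lambda$ and $\alpha$. Families: $\mathcal{F}^c$ characteristic ($\lambda(v,v)+\alpha(v)$ even); $\mathcal{F}^{ev}$: $\lambda$ even; $\mathcal{F}^o$: $\lambda$ even, $\alpha=0$. For nondegenerate $\kappa_i=\kappa(H_i,\lambda_i,\alpha_i)$: $[x]$ is the class in $\mathrm{Cok}\,\hat\lambda_i$; $\lambda_i^{-1}(x,y)=y(v)/r$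 with $rx=\hat\lambda_i(v)$, $r\ne 0$; $q^{ev}(\kappa_i)([x])=\frac12\lambda_i^{-1}(x,x)$ (for $\mathcal{F}^{ev},\mathcal{F}^o$), $q^c(\kappa_i)([x])=\frac12(\lambda_i^{-1}(x,x)+\lambda_i^{-1}(x,\alpha_i))$ (for $\mathcal{F}^c$), mod $\mathbb{Z}$. An isometry $\delta^*(\kappa_0)\cong\delta^*(\kappa_1)$ is an isomorphism $\theta:\mathrm{Cok}\,\hat\lambda_0\to\mathrm{Cok}\,\hat\lambda_1$ with $\theta([\alpha_0])=[\alpha_1]$ and $q^*(\kappa_1)\circ\theta=q^*(\kappa_0)$. For such $\theta$, $\kappa_0\cup_\theta\kappa_1^-$ denotes $\kappa(H',\lambda',\alpha')$ with $H'=\{(x_0,x_1)\in H_0^*\oplus H_1^*:\theta[x_0]=[x_1]\}$, $\lambda'((x_0,x_1),(y_0,y_1))=\lambda_0^{-1}(x_0,y_0)-\lambda_1^{-1}(x_1,y_1)$, $\alpha'=\hat\lambda'((\alpha_0,\alpha_1))$. *)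

(* Quadratic functions on finitely generated free abelian groups,
   in coordinates: H = Z^n = 'rV[int]_n, H^* = 'rV[int]_n via x(v) = v *m x^T. *)
From HB Require Import structures.
From mathcomp Require Import all_boot all_order all_algebra.
Set Implicit Arguments. Unset Strict Implicit. Unset Printing Implicit Defensive.
Import Order.TTheory GRing.Theory Num.Theory.
Local Open Scope ring_scope.

(* kappa(H, lambda, alpha) with H = Z^qdim, lambda(v,w) = v L w^T, alpha(v) = v a^T *)
Record qf := QF { qdim : nat; qlam : 'M[int]_qdim; qalpha : 'rV[int]_qdim }.

Definition is_qf (k : qf) : Prop := (qlam k)^T = qlam k.

Definition lam (k : qf) (v w : 'rV[int]_(qdim k)) : int := (v *m qlam k *m w^T) 0 0.
Definition alph (k : qf) (v : 'rV[int]_(qdim k)) : int := (v *m (qalpha k)^T) 0 0.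
Definition qval (k : qf) (v : 'rV[int]_(qdim k)) : int := lam v v + alph v.

(* adjoint lambda^ : H -> H^*, v |-> lambda(v, -), represented by the row vector v L *)
Definition adj (k : qf) (v : 'rV[int]_(qdim k)) : 'rV[int]_(qdim k) := v *m qlam k.
Definition qf_nondegenerate (k : qf) : Prop := injective (@adj k).
Definition qf_nonsingular (k : qf) : Prop := bijective (@adj k).

Definition qneg (k : qf) : qf := QF (- qlam k) (qalpha k).

(* restriction to the subgroup with Z-basis the rows of B *)
Definition restrict (k : qf) (m : nat) (B : 'M[int]_(m, qdim k)) : qf :=
  QF (B *m qlam k *m B^T) (qalpha k *m B^T).

Inductive qfamily := Fc | Fev | Fo.
Definition in_family (f : qfamily) (k : qf) : Prop :=
  match f with
  | Fc => forall v : 'rV[int]_(qdim k), (2 %| qval v)%Z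
  | Fev => forall v : 'rV[int]_(qdim k), (2 %| lam v v)%Z
  | Fo => (forall v : 'rV[int]_(qdim k), (2 %| lam v v)%Z) /\ qalpha k = 0
  end.

Definition subgroup n (S : 'rV[int]_n -> Prop) : Prop :=
  S 0 /\ forall v w, S v -> S w -> S (v - w).
Definition direct_summand n (S : 'rV[int]_n -> Prop) : Prop :=
  subgroup S /\ exists K : 'rV[int]_n -> Prop, subgroup K /\
    (forall v, exists s t, S s /\ K t /\ v = s + t) /\
    (forall v, S v -> K v -> v = 0).
Definition is_basis n m (B : 'M[int]_(m, n)) (S : 'rV[int]_n -> Prop) : Prop :=
  (forall v, S v <-> exists c : 'rV[int]_m, v = c *m B) /\
  injective (fun c : 'rV[int]_m => c *m B).

Definition perp (k : qf) (S : 'rV[int]_(qdim k) -> Prop) : 'rV[int]_(qdim k) -> Prop :=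
  fun v => forall v0, S v0 -> lam v v0 = 0.

(* cokernel of the adjoint: [x] = [y] *)
Definition cokeq (k : qf) (x y : 'rV[int]_(qdim k)) : Prop :=
  exists v, x - y = adj v.

(* lambda^{-1}(x,y) = y(v)/r where r x = lambda^(v); here r = det L, v = x adj(L) *)
Definition linv (k : qf) (x y : 'rV[int]_(qdim k)) : rat :=
  ((x *m \adj (qlam k) *m y^T) 0 0)%:~R / (\det (qlam k))%:~R.

(* q^*(kappa)([x]), as a rational representative of an element of Q/Z *)
Definition qlink (f : qfamily) (k : qf) (x : 'rV[int]_(qdim k)) : rat :=
  match f with
  | Fc => (linv x x + linv x (qalpha k)) / 2
  | _ => linv x x / 2
  end.

Definition eqQZ (p q : rat) : Prop := exists z : int, p - q = z%:~R.

(* theta : Cok lambda0^ -> Cok lambda1^, given by a map T on representatives *)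
Definition cok_isometry (f : qfamily) (k0 k1 : qf)
    (T : 'rV[int]_(qdim k0) -> 'rV[int]_(qdim k1)) : Prop :=
  (forall x y, cokeq x y -> cokeq (T x) (T y)) /\
      (forall x y, cokeq (T (x + y)) (T x + T y)) /\
      (forall x y, cokeq (T x) (T y) -> cokeq x y) /\
      (forall y, exists x, cokeq (T x) y) /\
      cokeq (T (qalpha k0)) (qalpha k1) /\
      (forall x, eqQZ (qlink f (T x)) (qlink f x)).

(* kappa0 \cup_theta kappa1^- : H' subset of H0^* (+) H1^* with lambda', alpha' *)
Definition glue_H (k0 k1 : qf) (T : 'rV[int]_(qdim k0) -> 'rV[int]_(qdim k1))
    (x0 : 'rV[int]_(qdim k0)) (x1 : 'rV[int]_(qdim k1)) : Prop :=
  cokeq (T x0) x1.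
Definition glue_lam (k0 k1 : qf) (x0 : 'rV[int]_(qdim k0)) (x1 : 'rV[int]_(qdim k1))
    (y0 : 'rV[int]_(qdim k0)) (y1 : 'rV[int]_(qdim k1)) : rat :=
  linv x0 y0 - linv x1 y1.
Definition glue_alpha (k0 k1 : qf) (x0 : 'rV[int]_(qdim k0)) (x1 : 'rV[int]_(qdim k1)) : rat :=
  glue_lam (qalpha k0) (qalpha k1) x0 x1.

Definition isometric_glue (k k0 k1 : qf) (T : 'rV[int]_(qdim k0) -> 'rV[int]_(qdim k1)) : Prop :=
  exists (phi0 : 'rV[int]_(qdim k) -> 'rV[int]_(qdim k0))
         (phi1 : 'rV[int]_(qdim k) -> 'rV[int]_(qdim k1)),
  (forall v w, phi0 (v + w) = phi0 v + phi0 w /\ phi1 (v + w) = phi1 v + phi1 w) /\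
      (forall v w, phi0 v = phi0 w -> phi1 v = phi1 w -> v = w) /\
      (forall v, glue_H T (phi0 v) (phi1 v)) /\
      (forall x0 x1, glue_H T x0 x1 -> exists v, phi0 v = x0 /\ phi1 v = x1) /\
      (forall v w, glue_lam (phi0 v) (phi1 v) (phi0 w) (phi1 w) = (lam v w)%:~R) /\
      (forall v, glue_alpha (phi0 v) (phi1 v) = (alph v)%:~R).

Arguments restrict k {m} B.
Arguments perp : clear implicits.
Arguments cok_isometry : clear implicits.
Arguments isometric_glue : clear implicits.

From HB Require Import structures.
From mathcomp Require Import all_boot all_order all_algebra.
From mathcomp Require Import ring.
Import Order.TTheory GRing.Theory Num.Theory.
Local Open Scope ring_scope.
Set Implicit Arguments. Unset Strict Implicit. Unset Printing Implicit Defensive.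

(* Nonsingularity makes the adjoint [v |-> v L] invertible, so [H1 = H0^perp] is
   the preimage of the annihilator of [H0] and has the complement [H0^* P^T L^-1],
   where [B0 P = 1] is a retraction onto [H0]. With [d = det lambda_0], the adjugate
   of [lambda_0] splits [d v = a B0 - b B1] for every [v], so [H0 + H1] has finite
   index in [H]. This yields the nondegeneracy of [kappa_1], [H1^perp = H0], and
   [lambda_0^-1(v L|H0, z|H0) - lambda_1^-1(v L|H1, z|H1) = z(v)]. Hence
   [v |-> (v L|H0, v L|H1)] is an isometry onto the glued form, whose underlying group
   consists of the pairs [(x0, x1)] with [x1 = theta x0] modulo the image of [lambda_1].
   At a lift [v] of [(x, theta x)] the same identity shows that the linking values of
   [x] and [theta x] differ by [kappa(v)/2] (by [lambda(v, v)/2] in the even families),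
   an integer because [kappa] lies in the family. *)

Lemma det_neq0_of_inj_mulmx m (A : 'M[int]_m) :
  injective (fun c : 'rV[int]_m => c *m A) -> \det A != 0.
Proof.
move=> injA; apply/negP => /eqP detA0.
have [L uL [R uR [d _ defA]]] := int_Smith_normal_form A.
set D := \matrix_(i, j) _ in defA.
have detD0 : \det D = 0.
  have unit_neq0 (U : 'M[int]_m) : U \in unitmx -> \det U != 0.
    by rewrite unitmxE; apply: contraTneq => ->; rewrite unitr0.
  move: detA0; rewrite defA !det_mulmx => /eqP.
  by rewrite !mulf_eq0 (negbTE (unit_neq0 _ uL)) (negbTE (unit_neq0 _ uR)) orbF => /eqP.
have trigD : is_trig_mx D.
  by apply/is_trig_mxP => i j /ltn_eqF ij; rewrite mxE ij mulr0n.
move: detD0; rewrite det_trig // => /eqP /prodf_eq0 [i _ /eqP Dii].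
have rowD0 : row i D = 0.
  apply/rowP => j; rewrite !mxE; have [<-|ij] := eqVneq i j; first by move: Dii; rewrite mxE.
  by rewrite (negbTE (ij : (i : nat) != j)) mulr0n.
pose c : 'rV[int]_m := 'e_i *m invmx L.
have eA : c *m A = 0 *m A.
  by rewrite mul0mx defA !mulmxA mulmxKV // -rowE rowD0 mul0mx.
have := congr1 (mulmx^~ L) (injA _ _ eA); rewrite /= mulmxKV // mul0mx => /rowP /(_ i).
by rewrite !mxE !eqxx.
Qed.

Lemma subgroupN n (S : 'rV[int]_n -> Prop) v : subgroup S -> S v -> S (- v).
Proof. by move=> [S0 SB] Sv; rewrite -sub0r; apply: SB. Qed.

Lemma subgroupD n (S : 'rV[int]_n -> Prop) v w : subgroup S -> S v -> S w -> S (v + w).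
Proof. by move=> subS Sv Sw; rewrite -[w]opprK; apply: subS.2 => //; apply: subgroupN. Qed.

Lemma subgroupZ n (S : 'rV[int]_n -> Prop) (z : int) v : subgroup S -> S v -> S (z *: v).
Proof.
move=> subS Sv; have SMn p : S (v *+ p).
  by elim: p => [|p IHp]; rewrite ?mulr0n ?mulrS; [case: subS | apply: subgroupD].
rewrite -[z]intz scaler_int; case: z => p; first exact: SMn.
by rewrite NegzE mulrNz; apply: subgroupN => //; exact: SMn.
Qed.

Lemma subgroup_mulmx n m (S : 'rV[int]_n -> Prop) (M : 'M[int]_(m, n)) c :
  subgroup S -> (forall i, S (row i M)) -> S (c *m M).
Proof.
move=> subS SM; rewrite mulmx_sum_row; apply: (big_ind S); first by case: subS.
  by move=> v w; apply: subgroupD.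
by move=> i _; apply: subgroupZ.
Qed.

Lemma direct_summand_basis_rinv n m (S : 'rV[int]_n -> Prop) (B : 'M[int]_(m, n)) :
  direct_summand S -> is_basis B S -> exists Q : 'M[int]_(n, m), B *m Q = 1%:M.
Proof.
move=> [subS [K [subK [decomp trivSK]]]] [spanB injB].
have /fin_all_exists [c Kc] : forall j : 'I_n, exists c : 'rV[int]_m, K ('e_j - c *m B).
  move=> j; have [s [t [Ss [Kt ->]]]] := decomp 'e_j.
  by have [c ->] := (spanB s).1 Ss; exists c; rewrite addrC addKr.
pose Q := \matrix_j c j.
have SB c' : S (c' *m B) by apply/spanB; exists c'.
have BQB : B *m Q *m B = B.
  apply/row_matrixP => i; rewrite !row_mul; apply/eqP; rewrite eq_sym -subr_eq0; apply/eqP.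
  apply: trivSK; first by apply: subS.2; rewrite ?rowE; apply: SB.
  rewrite -{1}[row i B]mulmx1 -mulmxA -mulmxBr; apply: subgroup_mulmx => // j.
  by rewrite linearB /= row1 row_mul rowK.
by exists Q; apply/row_matrixP => i; apply: injB; rewrite /= -!row_mul BQB mul1mx.
Qed.

Lemma qf_nonsingular_linv (k : qf) :
  qf_nonsingular k -> exists Li : 'M[int]_(qdim k), Li *m qlam k = 1%:M.
Proof.
move=> [g _ adjK]; exists (\matrix_i g (row i 1%:M)).
by apply/row_matrixP => i; rewrite row_mul rowK row1; apply: adjK.
Qed.

Lemma perpE (k : qf) (S : 'rV[int]_(qdim k) -> Prop) m (B : 'M[int]_(m, qdim k)) v :
  is_basis B S -> perp k S v <-> v *m qlam k *m B^T = 0.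
Proof.
move=> [spanB _]; split=> [perp_v | vB v0 /spanB [c ->]].
  apply/rowP => i; rewrite [RHS]mxE -(perp_v (row i B)).
    by rewrite /lam tr_row colE mulmxA -colE [RHS]mxE.
  by apply/spanB; exists 'e_i; rewrite rowE.
by rewrite /lam trmx_mul mulmxA vB mul0mx mxE.
Qed.

Lemma lam_restrict (k : qf) m (B : 'M[int]_(m, qdim k)) c d :
  lam (k := restrict k B) c d = lam (c *m B) (d *m B).
Proof. by rewrite /lam /= trmx_mul !mulmxA. Qed.

Lemma alph_restrict (k : qf) m (B : 'M[int]_(m, qdim k)) c :
  alph (k := restrict k B) c = alph (c *m B).
Proof. by rewrite /alph /= trmx_mul trmxK mulmxA. Qed.

Lemma lam_qneg (k : qf) c d : lam (k := qneg k) c d = - lam (k := k) c d.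
Proof. by rewrite /lam /= mulmxN mulNmx mxE. Qed.

Lemma is_qf_restrict (k : qf) m (B : 'M[int]_(m, qdim k)) : is_qf k -> is_qf (restrict k B).
Proof. by move=> k_sym; rewrite /is_qf /= !trmx_mul trmxK k_sym mulmxA. Qed.

Lemma is_qf_qneg (k : qf) : is_qf k -> is_qf (qneg k).
Proof. by move=> k_sym; rewrite /is_qf /= linearN /= k_sym. Qed.

Lemma in_family_restrict f (k : qf) m (B : 'M[int]_(m, qdim k)) :
  in_family f k -> in_family f (restrict k B).
Proof.
case: f => /=.
- by move=> fam c; rewrite /qval lam_restrict alph_restrict; apply: fam.
- by move=> fam c; rewrite lam_restrict; apply: fam.
- by move=> [fam ->]; split=> [c|]; rewrite ?lam_restrict ?mul0mx.
Qed.

Lemma in_family_qneg f (k : qf) : in_family f k -> in_family f (qneg k).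
Proof.
case: f => /=.
- move=> fam c; rewrite /qval lam_qneg.
  have -> : - lam c c + alph (k := qneg k) c = qval c - lam c c * 2 by rewrite /qval; ring.
  by rewrite rpredB ?dvdz_mull.
- by move=> fam c; rewrite lam_qneg rpredN.
- by move=> [fam alpha0]; split=> // c; rewrite lam_qneg rpredN.
Qed.

Lemma linv_scale (k : qf) (d : int) (x c y : 'rV[int]_(qdim k)) :
  qf_nondegenerate k -> d *: x = c *m qlam k ->
  d%:~R * linv x y = ((c *m y^T) 0 0)%:~R :> rat.
Proof.
move=> /det_neq0_of_inj_mulmx detk dx; rewrite /linv mulrA -intrM.
have -> : d * (x *m \adj (qlam k) *m y^T) 0 0 = \det (qlam k) * (c *m y^T) 0 0.
  transitivity ((d *: (x *m \adj (qlam k) *m y^T)) 0 0); first by rewrite [RHS]mxE.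
  by rewrite !scalemxAl dx -(mulmxA c) mul_mx_adj mul_mx_scalar -scalemxAl mxE.
by rewrite intrM mulrAC divff ?mul1r // intr_eq0.
Qed.

Lemma linv_sym (k : qf) (x y : 'rV[int]_(qdim k)) : is_qf k -> linv x y = linv y x.
Proof.
move=> k_sym; rewrite /linv -[in LHS](trmxK (x *m _ *m _)) [in LHS]mxE.
by rewrite !trmx_mul trmxK trmx_adj k_sym mulmxA.
Qed.

Lemma eqQZ_half_even (p q : rat) (s : int) :
  p - q = - s%:~R / 2 -> (2 %| s)%Z -> eqQZ p q.
Proof. by move=> pq /dvdzP [j sj]; exists (- j); rewrite pq sj intrM intrN mulNr mulfK. Qed.

Section OrthogonalSplitting.

Variable k : qf.
Local Notation n := (qdim k).
Local Notation L := (qlam k).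
Hypothesis L_sym : is_qf k.
Variable Li : 'M[int]_n.
Hypothesis LiL : Li *m L = 1%:M.

Let LLi : L *m Li = 1%:M. Proof. exact: mulmx1C. Qed.

Variables (H0 : 'rV[int]_n -> Prop) (m0 : nat) (B0 : 'M[int]_(m0, n)) (P : 'M[int]_(n, m0)).
Hypotheses (basis0 : is_basis B0 H0) (B0P : B0 *m P = 1%:M).

Let PB0 : P^T *m B0^T = 1%:M. Proof. by rewrite -trmx_mul B0P trmx1. Qed.

Let perp0E v : perp k H0 v <-> v *m L *m B0^T = 0. Proof. exact: perpE. Qed.

Lemma perp_direct_summand : direct_summand (perp k H0).
Proof.
have subP : subgroup (perp k H0).
  split=> [|v w /perp0E v0 /perp0E w0]; apply/perp0E; first by rewrite !mul0mx.
  by rewrite !mulmxBl v0 w0 subrr.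
split=> //; exists (fun v => exists x : 'rV_m0, v = x *m P^T *m Li).
split; [split | split].
- by exists 0; rewrite !mul0mx.
- by move=> _ _ [x ->] [y ->]; exists (x - y); rewrite !mulmxBl.
- move=> v; set x := v *m L *m B0^T.
  exists (v - x *m P^T *m Li), (x *m P^T *m Li).
  split; last by split; [exists x | rewrite subrK].
  by apply/perp0E; rewrite !mulmxBl -/x -(mulmxA _ Li) LiL mulmx1 -mulmxA PB0 mulmx1 subrr.
- move=> v /perp0E + [x defv]; rewrite defv -(mulmxA _ Li) LiL mulmx1 -mulmxA PB0 mulmx1.
  by move=> ->; rewrite !mul0mx.
Qed.

Hypothesis k0_nondeg : qf_nondegenerate (restrict k B0).
Variables (m1 : nat) (B1 : 'M[int]_(m1, n)).
Hypothesis basis1 : is_basis B1 (perp k H0).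

Local Notation k0 := (restrict k B0).
Local Notation k1 := (qneg (restrict k B1)).
Local Notation d0 := (\det (qlam k0)).

Let d0_neq0 : d0 != 0. Proof. exact: det_neq0_of_inj_mulmx. Qed.
Let k0_sym : is_qf k0. Proof. exact: is_qf_restrict. Qed.
Let k1_sym : is_qf k1. Proof. exact/is_qf_qneg/is_qf_restrict. Qed.

Lemma basis1_lam_basis0 (c : 'rV[int]_m1) : c *m B1 *m L *m B0^T = 0.
Proof. by apply/perp0E/(basis1.1 _); exists c. Qed.

Lemma basis0_lam_basis1 (c : 'rV[int]_m0) : c *m B0 *m L *m B1^T = 0.
Proof.
have B1LB0 : B1 *m L *m B0^T = 0.
  by apply/row_matrixP => i; rewrite row0 !row_mul rowE basis1_lam_basis0.
have B0LB1 : B0 *m L *m B1^T = (B1 *m L *m B0^T)^T by rewrite !trmx_mul trmxK L_sym mulmxA.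
by rewrite -!mulmxA (mulmxA B0) B0LB1 B1LB0 trmx0 mulmx0.
Qed.

Lemma scaled_decomposition (u : 'rV[int]_n) : exists a b,
  [/\ d0 *: u = a *m B0 - b *m B1,
      d0 *: (u *m L *m B0^T) = a *m qlam k0 &
      d0 *: (u *m L *m B1^T) = b *m qlam k1].
Proof.
set a := u *m L *m B0^T *m \adj (qlam k0).
have : perp k H0 (d0 *: u - a *m B0).
  apply/perp0E; rewrite !mulmxBl -!scalemxAl.
  have -> : a *m B0 *m L *m B0^T = a *m qlam k0 by rewrite /= !mulmxA.
  by rewrite /a -(mulmxA _ (\adj _)) mul_adj_mx mul_mx_scalar subrr.
case/(basis1.1 _) => c defc.
have defu : d0 *: u = a *m B0 + c *m B1 by rewrite -defc addrC subrK.
exists a, (- c); split.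
- by rewrite mulNmx opprK.
- by rewrite !scalemxAl defu !mulmxDl basis1_lam_basis0 addr0 /= !mulmxA.
- by rewrite !scalemxAl defu !mulmxDl basis0_lam_basis1 add0r /= mulNmx mulmxN opprK !mulmxA.
Qed.

Lemma dual_eq0_of_restrict (z : 'rV[int]_n) : z *m B0^T = 0 -> z *m B1^T = 0 -> z = 0.
Proof.
move=> z0 z1; apply/rowP => j; have [a [b [defe _ _]]] := scaled_decomposition 'e_j.
have zB i (B : 'M[int]_(i, n)) : z *m B^T = 0 -> B *m z^T = 0.
  by move=> zB0; rewrite -[B]trmxK -trmx_mul zB0 trmx0.
have := congr1 (mulmx^~ z^T) defe.
rewrite /= mulmxBl -!(mulmxA _ _ z^T) (zB _ B0 z0) (zB _ B1 z1) !mulmx0 subrr => ez.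
move/eqP: ez; rewrite -scalemxAl scalemx_eq0 (negbTE d0_neq0) -rowE => /eqP /rowP /(_ 0).
by rewrite !mxE.
Qed.

Lemma k1_nondeg : qf_nondegenerate k1.
Proof.
move=> c c'; rewrite /adj /= => /eqP; rewrite -subr_eq0 -mulmxBl mulmxN oppr_eq0 !mulmxA.
move=> /eqP cc'; have ccL : (c - c') *m B1 *m L = 0.
  by apply: dual_eq0_of_restrict; rewrite ?basis1_lam_basis0.
have : (c - c') *m B1 = 0 *m B1 by rewrite mul0mx -[LHS]mulmx1 -LLi mulmxA ccL mul0mx.
by move/basis1.2/eqP; rewrite subr_eq0 => /eqP.
Qed.

Lemma perp_perp (u : 'rV[int]_n) : u *m L *m B1^T = 0 -> exists c, u = c *m B0.
Proof.
move=> u1; have [a [b [defu _ ub]]] := scaled_decomposition u.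
have b0 : b = 0 by apply: k1_nondeg; rewrite /adj -ub u1 scaler0 mul0mx.
exists (u *m P); apply: (scalemx_inj d0_neq0).
by rewrite !scalemxAl defu b0 mul0mx subr0 -(mulmxA a B0 P) B0P mulmx1.
Qed.

(* [theta x] extends [x] from [H0] to [H] along the retraction [P], then restricts to [H1]. *)
Definition theta (x : 'rV[int]_m0) : 'rV[int]_m1 := x *m P^T *m B1^T.

Lemma theta_restrict (z : 'rV[int]_n) : cokeq (k := k1) (theta (z *m B0^T)) (z *m B1^T).
Proof.
have : perp k H0 ((z *m B0^T *m P^T - z) *m Li).
  by apply/perp0E; rewrite -(mulmxA _ Li) LiL mulmx1 mulmxBl -(mulmxA _ P^T) PB0 mulmx1 subrr.
case/(basis1.1 _) => c defc; exists (- c).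
rewrite /theta /adj /= mulNmx mulmxN opprK -mulmxBl.
have -> : z *m B0^T *m P^T - z = c *m B1 *m L by rewrite -defc -(mulmxA _ Li) LiL mulmx1.
by rewrite !mulmxA.
Qed.

Lemma glue_H_lift x0 x1 : glue_H (k0 := k0) (k1 := k1) theta x0 x1 ->
  exists u, u *m L *m B0^T = x0 /\ u *m L *m B1^T = x1.
Proof.
case=> e defe; exists ((x0 *m P^T + e *m B1 *m L) *m Li).
rewrite -(mulmxA _ Li) LiL mulmx1 !mulmxDl -(mulmxA x0) PB0 mulmx1 basis1_lam_basis0 addr0.
split=> //; have -> : x1 = theta x0 - (theta x0 - x1) by rewrite subKr.
by rewrite defe /adj /= mulmxN opprK /theta !mulmxA.
Qed.

Lemma glue_lam_restrict_dual (v z : 'rV[int]_n) :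
  linv (k := k0) (v *m L *m B0^T) (z *m B0^T) - linv (k := k1) (v *m L *m B1^T) (z *m B1^T)
  = ((v *m z^T) 0 0)%:~R.
Proof.
have [a [b [defv va vb]]] := scaled_decomposition v.
apply: (@mulfI _ d0%:~R); first by rewrite intr_eq0.
rewrite mulrBr (linv_scale _ k0_nondeg va) (linv_scale _ k1_nondeg vb) -intrB -intrM.
congr (_%:~R); transitivity ((d0 *: v *m z^T) 0 0); last by rewrite -scalemxAl [LHS]mxE.
rewrite defv mulmxBl [RHS]mxE [X in _ = _ + X]mxE.
by rewrite !trmx_mul !trmxK !mulmxA.
Qed.

Lemma glue_lam_restrict (v w : 'rV[int]_n) :
  glue_lam (k0 := k0) (k1 := k1)
    (v *m L *m B0^T) (v *m L *m B1^T) (w *m L *m B0^T) (w *m L *m B1^T) = (lam v w)%:~R.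
Proof. by rewrite /glue_lam glue_lam_restrict_dual trmx_mul L_sym mulmxA. Qed.

Lemma glue_alpha_restrict (v : 'rV[int]_n) :
  glue_alpha (k0 := k0) (k1 := k1) (v *m L *m B0^T) (v *m L *m B1^T) = (alph v)%:~R.
Proof.
rewrite /glue_alpha /glue_lam (linv_sym _ _ k0_sym) (linv_sym _ _ k1_sym).
exact: glue_lam_restrict_dual.
Qed.

Lemma isometric_glue_theta : isometric_glue k k0 k1 theta.
Proof.
exists (fun v => v *m L *m B0^T), (fun v => v *m L *m B1^T).
split; [|split; [|split; [|split; [|split]]]] => /=.
- by move=> v w; rewrite !mulmxDl.
- move=> v w eq0 eq1; apply/eqP; rewrite -subr_eq0; apply/eqP.
  have vwL : (v - w) *m L = 0 by apply: dual_eq0_of_restrict; rewrite !mulmxBl ?eq0 ?eq1 subrr.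
  by rewrite -[v - w]mulmx1 -LLi mulmxA vwL mul0mx.
- by move=> v; apply: theta_restrict.
- exact: glue_H_lift.
- exact: glue_lam_restrict.
- exact: glue_alpha_restrict.
Qed.

Lemma theta_cokeq x y : cokeq (k := k0) x y -> cokeq (k := k1) (theta x) (theta y).
Proof.
case=> c defc; have [e defe] := theta_restrict (c *m B0 *m L).
by exists e; rewrite -defe basis0_lam_basis1 subr0 /theta -!mulmxBl defc /adj /= !mulmxA.
Qed.

Lemma theta_cokeq_inj x y : cokeq (k := k1) (theta x) (theta y) -> cokeq (k := k0) x y.
Proof.
case=> e defe; have [|u [ux u1]] := @glue_H_lift (x - y) 0.
  by exists e; rewrite subr0 /theta !mulmxBl.
have [c defu] := perp_perp u1.
by exists c; rewrite -ux defu /adj /= !mulmxA.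
Qed.

Lemma theta_cok_surj y : exists x, cokeq (k := k1) (theta x) y.
Proof.
have [P1 B1P1] := direct_summand_basis_rinv perp_direct_summand basis1.
exists (y *m P1^T *m B0^T).
have := theta_restrict (y *m P1^T).
by rewrite -(mulmxA y P1^T B1^T) -trmx_mul B1P1 trmx1 mulmx1.
Qed.

Lemma qlink_theta f : in_family f k ->
  forall x, eqQZ (qlink f (k := k1) (theta x)) (qlink f (k := k0) x).
Proof.
move=> fam x; have [|u [ux uy]] := @glue_H_lift x (theta x).
  by exists 0; rewrite subrr /adj mul0mx.
have := glue_lam_restrict u u; have := glue_alpha_restrict u.
rewrite /glue_alpha /glue_lam ux uy.
rewrite (linv_sym _ _ k0_sym) (linv_sym _ _ k1_sym).
case: f fam => /= [fam|fam|[fam _]] alpha_u lam_u; apply: (eqQZ_half_even _ (fam u)).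
- by rewrite /qval intrD -alpha_u -lam_u; ring.
- by rewrite -lam_u; ring.
- by rewrite -lam_u; ring.
Qed.

Lemma cok_isometry_theta f : in_family f k -> cok_isometry f k0 k1 theta.
Proof.
move=> fam; split; [|split; [|split; [|split; [|split]]]].
- exact: theta_cokeq.
- by move=> x y; exists 0; rewrite /theta !mulmxDl subrr /adj mul0mx.
- exact: theta_cokeq_inj.
- exact: theta_cok_surj.
- exact: theta_restrict.
- exact: qlink_theta.
Qed.

End OrthogonalSplitting.

Theorem lemma1p4 (f : qfamily) (k : qf) (H0 : 'rV[int]_(qdim k) -> Prop)
    (m0 : nat) (B0 : 'M[int]_(m0, qdim k)) :
  is_qf k -> in_family f k -> qf_nonsingular k ->
  direct_summand H0 -> is_basis B0 H0 ->
  qf_nondegenerate (restrict k B0) ->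
  direct_summand (perp k H0) /\
  forall (m1 : nat) (B1 : 'M[int]_(m1, qdim k)), is_basis B1 (perp k H0) ->
    let k0 := restrict k B0 in
    let k1 := qneg (restrict k B1) in
    [/\ qf_nondegenerate k0, in_family f k0, qf_nondegenerate k1, in_family f k1 &
      exists T : 'rV[int]_m0 -> 'rV[int]_m1,
        cok_isometry f k0 k1 T /\ isometric_glue k k0 k1 T].
Proof.
move=> k_sym fam /qf_nonsingular_linv [Li LiL] ds0 basis0 k0_nondeg.
have [P B0P] := direct_summand_basis_rinv ds0 basis0.
split=> [|m1 B1 basis1 k0 k1]; first exact (perp_direct_summand LiL basis0 B0P).
split=> //.
- exact (in_family_restrict B0 fam).
- exact (k1_nondeg k_sym LiL basis0 k0_nondeg basis1).
- exact (in_family_qneg (in_family_restrict B1 fam)).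
exists (theta P B1); split.
- exact (cok_isometry_theta k_sym LiL basis0 B0P k0_nondeg basis1 fam).
- exact (isometric_glue_theta k_sym LiL basis0 B0P k0_nondeg basis1).
Qed.
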